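(* Let $M\in\mathrm{SL}(2,\mathbb Z)$ be a hyperbolic matrix, $N\in\mathbb N$, and $\{\phi_j\}_{j=1}^N$ an eigenbasis of $\hat M$ in $\mathcal H_N$ (setting in the context). Let $1\le p<\infty$, $L>0$, and let $D=D(r)$ satisfy $1/D=o(r)$ as $r\to0$; let $b^\pm_{x,r}$ be the majorant/minorant trigonometric polynomials of the discs $B_2(x,r)\subset\mathbb T^2$ described in the context. Define $$\mathcal S^\pm(N,L):=\Big\{1\le j\le N:\ \sup_{x\in\mathbb T^2}\Big|\frac{\langle\mathrm{Op}_N(b^\pm_{x,r})\phi_j,\phi_j\rangle}{\mu(b^\pm_{x,r})}-1\Big|\ge L\Big\}.$$ Then $$\frac{\#\mathcal S^\pm(N,L)}{N}\le\frac{c\,D^{2(p-1)}}{L^p}\sum_{n\in\mathbb Z^2,\,1\le|n|\le D}V_p\big(N,\hat T_N(n)\big),$$ where $c$ depends on $p$.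
   Context: $M=\exp\begin{pmatrix}\gamma&\beta\\-\alpha&-\gamma\end{pmatrix}\in\mathrm{SL}(2,\mathbb Z)$, $\gamma^2>\alpha\beta$, acting on row vectors of $\mathbb T^2=\mathbb R^2/\mathbb Z^2$. Symplectic product $u\wedge v=u_2v_1-u_1v_2$. With $h=1/N$: $\hat q\psi=q\psi$, $\hat p\psi=\frac{h}{2\pi i}\psi'$, $\hat T_v=\exp(-\frac{2\pi i}{h}(v_1\hat p-v_2\hat q))$, $\hat H=\frac12\alpha\hat q^2+\frac12\beta\hat p^2+\frac\gamma2(\hat q\hat p+\hat p\hat q)$, $\hat M=e^{-2\pi i\hat H/h}$ acting on the $N$-dimensional Hilbert space $\mathcal H_N$ of distributions $\psi(q)=\sum_{k\in\mathbb Z}\Psi(k)\delta(q-(k+\kappa_1)/N)$, $\Psi(k+N)=e^{-2\pi i\kappa_2}\Psi(k)$ (fixed $\kappa\in\mathbb T^2$ chosen so that $\hat M$ preserves $\mathcal H_N$), inner product $\frac1N\sum_{k=1}^N\Psi(k)\overline{\Phi(k)}$; an eigenbasis is an orthonormal basis of eigenvectors of $\hat M$. $\hat T_N(n):=\hat T_{n/N}$; $\mathrm{Op}_N(a)=\sum_n\tilde a(n)\hat T_N(n)$ for $a(x)=\sum_n\tilde a(n)e^{2\pi i(n\wedge x)}$; $\mu(a)=\int_{\mathbb T^2}a\,dq\,dp=\tilde a(0)$. $p$-moment: $V_p(N,\hat T_N(n)):=\frac1N\sum_{j=1}^N|\langle\hat T_N(n)\phi_j,\phi_j\rangle-\mu(e^{2\pi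 i(n\wedge\cdot)})|^p$, which for $n\neq0$ equals $\frac1N\sum_j|\langle\hat T_N(n)\phi_j,\phi_j\rangle|^p$. Majorants/minorants: with $rD\ge1$, $a_r^\pm$ are trigonometric polynomials on $\mathbb T^2$ with $a_r^-\le\chi_{B_2(0,r)}\le a_r^+$, $\widetilde{a_r^\pm}(n)=0$ for $|n|\ge D$, $\widetilde{a_r^\pm}(0)=\mathrm{Vol}(B_2(0,r))+O(r/D)$, $|\widetilde{a_r^\pm}(n)|\le c_0r^2$ for all $n$ with an absolute constant $c_0$; $b^\pm_{x,r}(y):=a_r^\pm(y-x)$. *)

From HB Require Import structures.
From mathcomp Require Import all_boot all_order all_algebra.
From mathcomp Require Import all_classical all_reals all_analysis.
From mathcomp.real_closed Require Import complex.



Unset Printing Implicit Defensive.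

Import Order.TTheory GRing.Theory Num.Theory.
Local Open Scope ring_scope.
Local Open Scope complex_scope.

Section QuantCat.
Context {R : realType}.
Local Notation C := (R[i]).

Definition ex (t : R) : C := (cos (2 * pi * t)) +i* (sin (2 * pi * t)).

Definition wedge (u v : R * R) : R := u.2 * v.1 - u.1 * v.2.

Definition cabs (z : C) : R := let: a +i* b := z in Num.sqrt (a ^+ 2 + b ^+ 2).

Definition intpt (n : int * int) : R * R := (n.1%:~R, n.2%:~R).

Definition znorm (n : int * int) : R := Num.sqrt ((n.1 ^+ 2 + n.2 ^+ 2)%:~R).

Definition zbox (K : nat) : seq (int * int) :=
  [seq ((i%:Z - K%:Z)%R, (j%:Z - K%:Z)%R) | i <- iota 0 (K + K).+1, j <- iota 0 (K + K).+1].

Definition trig (a : int * int -> C) (K : nat) (x : R * R) : C :=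
  \sum_(n <- zbox K) a n * ex (wedge (intpt n) x).

(* mu(a) = integral of a over T^2 = a~(0) *)
Definition muC (a : int * int -> C) : C := a (0, 0).

(* Fourier coefficients of b_{x}(y) := a(y - x):
   b~(n) = a~(n) e(- n /\ x) *)
Definition bcoef (a : int * int -> C) (x : R * R) (n : int * int) : C :=
  a n * ex (- wedge (intpt n) x).

Definition inball (r : R) (y : R * R) : Prop :=
  exists m : int * int, (y.1 - m.1%:~R) ^+ 2 + (y.2 - m.2%:~R) ^+ 2 < r ^+ 2.

(* An element psi = sum_k Psi(k) delta(q-(k+kappa1)/N) is represented by
   Psi : int -> C; it lies in H_N iff Psi(k+N) = e^{-2 pi i kappa2} Psi(k). *)
Definition inHN (N : nat) (kappa : R * R) (Psi : int -> C) : Prop :=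
  forall k : int, Psi (k + N%:Z)%R = ex (- kappa.2) * Psi k.

Definition inner (N : nat) (Psi Phi : int -> C) : C :=
  (N%:R)^-1 * \sum_(k < N) Psi (k.+1)%:Z * conjc (Phi (k.+1)%:Z).

(* T_N(n) = T_{n/N} = exp(-(2 pi i/h)(v1 p - v2 q)), v = n/N, acting on H_N:
   (T_N(n) Psi)(k) = e^{(pi i/N)(2 n2 (k+kappa1) - n1 n2)} Psi(k - n1) *)
Definition TN (N : nat) (kappa : R * R) (n : int * int) (Psi : int -> C) : int -> C :=
  fun k => ex ((2 * n.2%:~R * (k%:~R + kappa.1) - (n.1 * n.2)%:~R) / (2 * N%:R))
           * Psi (k - n.1)%R.

Definition OpN (N : nat) (kappa : R * R) (a : int * int -> C) (K : nat)
  (Psi : int -> C) : int -> C :=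
  fun k => \sum_(n <- zbox K) a n * TN N kappa n Psi k.

(* mu(e^{2 pi i (n /\ .)}) *)
Definition mu_e (n : int * int) : C := if n == (0, 0) then 1 else 0.

Definition Vp (N : nat) (kappa : R * R) (phi : 'I_N -> int -> C) (p : R)
  (n : int * int) : R :=
  (N%:R)^-1 * \sum_(j < N)
     (cabs (inner N (TN N kappa n (phi j)) (phi j) - mu_e n)) `^ p.

Definition rowmul (n : int * int) (M : 'M[int]_2) : int * int :=
  (n.1 * M 0 0 + n.2 * M 1 0, n.1 * M 0 1 + n.2 * M 1 1)%R.

(* U is (up to a phase) the quantization hat M of M on H_N:
   a unitary operator of H_N satisfying the exact Egorov property
   U^{-1} T_N(n) U = T_N(n M) for all n in Z^2. *)
Definition is_quantization (N : nat) (kappa : R * R) (M : 'M[int]_2)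
  (U : (int -> C) -> (int -> C)) : Prop :=
  [/\ (forall Psi, inHN N kappa Psi -> inHN N kappa (U Psi)),
      (forall (c : C) Psi Phi, inHN N kappa Psi -> inHN N kappa Phi ->
          U (fun k => c * Psi k + Phi k) = (fun k => c * U Psi k + U Phi k)),
      (forall Psi Phi, inHN N kappa Psi -> inHN N kappa Phi ->
          inner N (U Psi) (U Phi) = inner N Psi Phi) &
      (forall n Psi, inHN N kappa Psi ->
          TN N kappa n (U Psi) = U (TN N kappa (rowmul n M) Psi))].

Definition is_eigenbasis (N : nat) (kappa : R * R)
  (U : (int -> C) -> (int -> C)) (phi : 'I_N -> int -> C) : Prop :=
  [/\ (forall j, inHN N kappa (phi j)),
      (forall i j, inner N (phi i) (phi j) = (i == j)%:R) &
      (forall j, exists lam : C, U (phi j) = (fun k => lam * phi j k))].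

Definition hyperbolic_SL2Z (M : 'M[int]_2) : Prop :=
  \det M = 1 /\ 2 < \tr M.

Definition Sexc (N : nat) (kappa : R * R) (phi : 'I_N -> int -> C)
  (a : int * int -> C) (K : nat) (L : R) : {set 'I_N} :=
  [set j : 'I_N | `[< L <= sup (range (fun x : R * R =>
      cabs (inner N (OpN N kappa (bcoef a x) K (phi j)) (phi j) / muC (bcoef a x) - 1))) >]].

End QuantCat.

From HB Require Import structures.
From mathcomp Require Import all_boot all_order all_algebra.
From mathcomp Require Import all_classical all_reals all_analysis.
From mathcomp.real_closed Require Import complex.
From mathcomp Require Import ring lra zify.
Import Order.TTheory GRing.Theory Num.Theory.
Local Open Scope ring_scope.
Local Open Scope complex_scope.

(* Expanding Op_N(b_{x,r}) in the translations T_N(n), the phases e(-n /\ x) have modulus one,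
   mu(b_{x,r}) = a~(0) is of size r^2 and every coefficient is O(r^2).  Hence the normalized
   deviation of phi_j is bounded, uniformly in x, by a constant times the sum of
   |<T_N(n) phi_j, phi_j>| over the at most 9 D^2 frequencies 1 <= |n| <= D.  Convexity of
   t |-> t^p turns this into L^p <= c D^(2(p-1)) sum_n |<T_N(n) phi_j, phi_j>|^p for every
   exceptional j, and summing over j (Chebyshev) gives the bound. *)

Section PowerMean.
Context {R : realType} {p : R}.
Hypothesis p_ge1 : 1 <= p.

Let p_gt0 : 0 < p. Proof. exact: lt_le_trans p_ge1. Qed.

Lemma powR_divr (u c : R) : 0 <= u -> 0 < c -> (u / c) `^ p = u `^ p / c `^ p.
Proof.
move=> u0 c0; rewrite powRM ?invr_ge0 ?(ltW c0) //.
by rewrite -powR_inv1 ?ltW // -powRrM mulN1r powRN.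
Qed.

Lemma powR_mean_le {I : Type} (s : seq I) (f : I -> R) : (forall i, 0 <= f i) ->
  ((\sum_(i <- s) f i) / (size s)%:R) `^ p <= (\sum_(i <- s) f i `^ p) / (size s)%:R.
Proof.
move=> f_ge0; elim: s => [|x s IH]; first by rewrite !big_nil !mul0r powR0 ?gt_eqF.
rewrite !big_cons /=; set S := \sum_(i <- s) f i; set T := \sum_(i <- s) f i `^ p.
have [/size0nil s0|s_neq0] := eqVneq (size s) 0%N.
  by rewrite /S /T s0 !big_nil !addr0 !divr1.
pose m : R := (size s)%:R.
have m_gt0 : 0 < m by rewrite ltr0n lt0n.
have m1_gt0 : 0 < m + 1 by rewrite ltr_wpDl.
have t_ge0 : 0 <= (m + 1)^-1 by rewrite invr_ge0 ltW.
have t_le1 : (m + 1)^-1 <= 1 by rewrite invf_le1 // lerDr ltW.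
have onem_t : 1 - (m + 1)^-1 = m / (m + 1) by field; rewrite lt0r_neq0.
have mean_split : (f x + S) / (m + 1) = (m + 1)^-1 * f x + (1 - (m + 1)^-1) * (S / m).
  by rewrite onem_t; field; rewrite !lt0r_neq0.
have cvx : ((m + 1)^-1 * f x + (1 - (m + 1)^-1) * (S / m)) `^ p <=
    (m + 1)^-1 * f x `^ p + (1 - (m + 1)^-1) * (S / m) `^ p.
  apply: (convex_powR p_ge1 (Itv01 t_ge0 t_le1));
    by rewrite inE /= in_itv /= andbT ?f_ge0 ?divr_ge0 ?sumr_ge0 ?ltW.
rewrite -natr1 -/m mean_split (le_trans cvx) // onem_t.
have -> : (f x `^ p + T) / (m + 1) = (m + 1)^-1 * f x `^ p + m / (m + 1) * (T / m).
  by field; rewrite !lt0r_neq0.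
by rewrite lerD2l ler_wpM2l // divr_ge0 // ltW.
Qed.

Lemma powR_sum_le {I : Type} (s : seq I) (f : I -> R) : (forall i, 0 <= f i) ->
  (\sum_(i <- s) f i) `^ p <= (size s)%:R `^ (p - 1) * \sum_(i <- s) f i `^ p.
Proof.
move=> f_ge0; have [/size0nil ->|s_neq0] := eqVneq (size s) 0%N.
  by rewrite !big_nil powR0 ?gt_eqF ?mulr0.
have m_gt0 : 0 < (size s)%:R :> R by rewrite ltr0n lt0n.
have := powR_mean_le s f f_ge0.
rewrite powR_divr ?sumr_ge0 // ler_pdivrMr ?powR_gt0 // -(mulr_powRB1 (ltW m_gt0) p_gt0).
by rewrite mulrA divfK ?gt_eqF // mulrC.
Qed.
End PowerMean.

Lemma ler_sum_supp {R : numDomainType} {I : Type} (s : seq I) (P Q : pred I)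
    (g : I -> R) :
  (forall i, 0 <= g i) -> (forall i, P i -> ~~ Q i -> g i = 0) ->
  \sum_(i <- s | P i) g i <= \sum_(i <- s | Q i) g i.
Proof.
move=> g_ge0 gQ; rewrite big_mkcond [leRHS]big_mkcond; apply: ler_sum => i _.
by case Pi: (P i); case Qi: (Q i) => //; rewrite gQ ?Qi.
Qed.

Lemma card_mul_le_sum {R : numDomainType} (I : finType) (S : {set I}) (W : I -> R)
    (t : R) :
  (forall i, 0 <= W i) -> (forall i, i \in S -> t <= W i) ->
  #|S|%:R * t <= \sum_i W i.
Proof.
move=> W_ge0 tW; rewrite mulr_natl -sumr_const [leRHS](bigID (mem S)) /= -[leLHS]addr0.
by apply: lerD; [apply: ler_sum => i /tW | apply: sumr_ge0].
Qed.

Section ComplexModulus.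
Context {R : realType}.
Implicit Types (z w : R[i]) (x : R).

Lemma cabs_ge0 z : 0 <= cabs z.
Proof. by case: z => a b; rewrite /cabs sqrtr_ge0. Qed.

Lemma cabs0 : cabs (0 : R[i]) = 0.
Proof. exact: Normc.normc0. Qed.

Lemma cabs_eq0 z : cabs z = 0 -> z = 0.
Proof. exact: Normc.eq0_normc. Qed.

Lemma cabsM z w : cabs (z * w) = cabs z * cabs w.
Proof. exact: Normc.normcM. Qed.

Lemma cabsV z : cabs z^-1 = (cabs z)^-1.
Proof. exact: Normc.normcV. Qed.

Lemma cabsN z : cabs (- z) = cabs z.
Proof. exact: normcN. Qed.

Lemma cabsD z w : cabs (z + w) <= cabs z + cabs w.
Proof. exact: le_normcD. Qed.

Lemma cabs_sum {I : Type} (s : seq I) (P : pred I) (F : I -> R[i]) :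
  cabs (\sum_(i <- s | P i) F i) <= \sum_(i <- s | P i) cabs (F i).
Proof.
elim/big_rec2: _ => [|i y1 y2 _ IH]; first by rewrite cabs0.
by apply: le_trans (cabsD _ _) _; rewrite lerD2l.
Qed.

Lemma cabs_real x : 0 <= x -> cabs x%:C = x.
Proof. by move=> x_ge0; rewrite /cabs /= expr0n addr0 sqrtr_sqr ger0_norm. Qed.

Lemma cabs_ex x : cabs (ex x) = 1.
Proof. by rewrite /ex /cabs cos2Dsin2 sqrtr1. Qed.

Lemma cabs_ge_half x z : 0 <= x -> cabs (z - x%:C) <= x / 2 -> x / 2 <= cabs z.
Proof.
move=> x_ge0; have := cabsD (x%:C - z) z; rewrite subrK cabs_real // -cabsN opprB.
lra.
Qed.

End ComplexModulus.

Section LatticeBox.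
Context {R : realType}.

Definition annulus (D : R) : pred (int * int) :=
  fun n => (1 <= znorm (R:=R) n) && (znorm n <= D).

Lemma zbox0 K : (0, 0) \in zbox K.
Proof.
apply/allpairsP; exists (K, K).
by split; rewrite ?mem_iota /= ?subrr //; lia.
Qed.

Lemma zbox_uniq K : uniq (zbox K).
Proof.
apply: allpairs_uniq; rewrite ?iota_uniq //.
move=> [i j] [i' j'] _ _ /= [] /eqP; rewrite (inj_eq (addIr _)) => /eqP [->] /eqP.
by rewrite (inj_eq (addIr _)) => /eqP [->].
Qed.

Lemma size_zbox_le (D : R) : 1 <= D -> (size (zbox (Num.truncn D)))%:R <= 9 * D ^+ 2.
Proof.
move=> D_ge1; set K := Num.truncn D.
have K_le : K%:R <= D by rewrite truncn_le (le_trans ler01 D_ge1).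
have side_le : (K + K).+1%:R <= 3 * D by rewrite -natr1 natrD; lra.
rewrite /zbox size_allpairs size_iota natrM.
by apply: le_trans (ler_pM _ _ side_le side_le) _ => //; nra.
Qed.

Lemma znorm00 : znorm (0, 0) = 0 :> R.
Proof. by rewrite /znorm /= expr0n addr0 sqrtr0. Qed.

Lemma znorm_ge1 n : n != (0, 0) -> 1 <= znorm n :> R.
Proof.
case: n => x y; rewrite xpair_eqE negb_and => nz.
have sq_ge1 : 1 <= x ^+ 2 + y ^+ 2 by case/orP: nz; nia.
rewrite /znorm /= -{1}sqrtr1 ler_sqrt ?ler1z //.
by rewrite ler0z (le_trans _ sq_ge1).
Qed.

Lemma annulus_neq0 (D : R) n : annulus D n -> n != (0, 0).
Proof.
by case/andP=> n_ge1 _; apply: contraTneq n_ge1 => ->; rewrite znorm00 ler10.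
Qed.

Lemma size_annulus_powR_le (D p : R) : 1 <= D -> 1 <= p ->
  (size [seq n <- zbox (Num.truncn D) | annulus D n])%:R `^ (p - 1)
    <= 9 `^ (p - 1) * D `^ (2 * (p - 1)).
Proof.
move=> D_ge1 p_ge1; have p1_ge0 : 0 <= p - 1 by rewrite subr_ge0.
have size_le : (size [seq n <- zbox (Num.truncn D) | annulus D n])%:R <= 9 * D ^+ 2.
  by apply: le_trans _ (size_zbox_le _ D_ge1); rewrite ler_nat size_filter count_size.
apply: (le_trans (ge0_ler_powR p1_ge0 _ _ size_le)); rewrite ?nnegrE ?ler0n //.
  by rewrite mulr_ge0 ?sqr_ge0.
by rewrite powRM ?sqr_ge0 // powRrM -[2]/(2%:R) powR_mulrn // (le_trans ler01).
Qed.

End LatticeBox.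

Section ExceptionalSet.
Variables (R : realType) (N : nat) (kappa : R * R).
Implicit Types (Phi : int -> R[i]) (a : int * int -> R[i]).

Lemma inner_suml {I : Type} (s : seq I) (c : I -> R[i]) (T : I -> int -> R[i]) Phi :
  inner N (fun k => \sum_(i <- s) c i * T i k) Phi = \sum_(i <- s) c i * inner N (T i) Phi.
Proof.
rewrite /inner; under eq_bigr do rewrite big_distrl /=.
rewrite exchange_big big_distrr /=; apply: eq_bigr => i _.
rewrite mulrCA; congr (_ * _); rewrite big_distrr /=.
by apply: eq_bigr => k _; rewrite mulrA.
Qed.

Lemma TN0 Phi : TN N kappa (0, 0) Phi = Phi.
Proof.
apply: funext => k; rewrite /TN /= !mulr0 !mul0r subr0 mul0r subr0.
by rewrite /ex mulr0 cos0 sin0 mul1r.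
Qed.

Lemma bcoef0 a x : bcoef a x (0, 0) = a (0, 0).
Proof.
by rewrite /bcoef /wedge /intpt /= !mul0r subrr oppr0 /ex mulr0 cos0 sin0 mulr1.
Qed.

Lemma deviation_le (A D : R) a Phi x :
  inner N Phi Phi = 1 -> a (0, 0) != 0 ->
  (forall n, D <= znorm n -> a n = 0) ->
  (forall n, n != (0, 0) -> cabs (a n) <= A * cabs (a (0, 0))) ->
  cabs (inner N (OpN N kappa (bcoef a x) (Num.truncn D) Phi) Phi / muC (bcoef a x) - 1)
   <= A * \sum_(n <- zbox (Num.truncn D) | annulus D n)
            cabs (inner N (TN N kappa n Phi) Phi - mu_e n).
Proof.
move=> Phi_unit a0_neq0 a_supp a_le.
rewrite /muC bcoef0 /OpN inner_suml (bigD1_seq (0, 0)) ?zbox0 ?zbox_uniq //=.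
rewrite TN0 Phi_unit bcoef0.
set rest := \sum_(n <- _ | n != (0, 0)) _.
have -> : (a (0, 0) * 1 + rest) / a (0, 0) - 1 = rest / a (0, 0) by field.
have a0_gt0 : 0 < cabs (a (0, 0)).
  by rewrite lt_neqAle cabs_ge0 andbT eq_sym; apply: contra a0_neq0 => /eqP/cabs_eq0->.
rewrite cabsM cabsV ler_pdivrMr // mulrAC big_distrr /=.
rewrite /rest; apply: le_trans (cabs_sum _ _ _) _.
apply: le_trans (@ler_sum_supp _ _ _ _ (annulus D) _ _ _) _.
- by move=> n; apply: cabs_ge0.
- move=> n n_neq0; rewrite /annulus znorm_ge1 //= -ltNge => /ltW/a_supp a_n0.
  by rewrite /bcoef a_n0 !mul0r cabs0.
apply: ler_sum => n /annulus_neq0 n_neq0.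
rewrite /bcoef cabsM (cabsM (a n)) cabs_ex mulr1 /mu_e (negbTE n_neq0) subr0.
by rewrite ler_wpM2r ?cabs_ge0 ?a_le.
Qed.

Variables (p : R) (phi : 'I_N -> int -> R[i]).
Hypothesis p_ge1 : 1 <= p.

Let p_gt0 : 0 < p. Proof. exact: lt_le_trans p_ge1. Qed.

Lemma exceptional_moment_le (A D L : R) a j :
  0 <= A -> 1 <= D -> 0 < L -> inner N (phi j) (phi j) = 1 -> a (0, 0) != 0 ->
  (forall n, D <= znorm n -> a n = 0) ->
  (forall n, n != (0, 0) -> cabs (a n) <= A * cabs (a (0, 0))) ->
  j \in Sexc N kappa phi a (Num.truncn D) L ->
  L `^ p <= A `^ p * 9 `^ (p - 1) * D `^ (2 * (p - 1)) *
    \sum_(n <- zbox (Num.truncn D) | annulus D n)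
       cabs (inner N (TN N kappa n (phi j)) (phi j) - mu_e n) `^ p.
Proof.
move=> A_ge0 D_ge1 L_gt0 phi_unit a0_neq0 a_supp a_le; rewrite inE => /asboolP L_le_sup.
set y := fun n => cabs (inner N (TN N kappa n (phi j)) (phi j) - mu_e n).
have y_ge0 n : 0 <= y n by apply: cabs_ge0.
have L_le : L <= A * \sum_(n <- zbox (Num.truncn D) | annulus D n) y n.
  apply: le_trans L_le_sup _; apply: ge_sup; first by eexists; exists (0, 0).
  by move=> _ [x _ <-]; apply: deviation_le.
have sum_ge0 : 0 <= \sum_(n <- zbox (Num.truncn D) | annulus D n) y n.
  exact: sumr_ge0.
apply: (le_trans (ge0_ler_powR (ltW p_gt0) _ _ L_le));
  rewrite ?nnegrE ?(ltW L_gt0) ?mulr_ge0 //.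
rewrite powRM // -!mulrA ler_wpM2l ?powR_ge0 //.
have := powR_sum_le p_ge1 [seq n <- zbox (Num.truncn D) | annulus D n] y y_ge0.
rewrite !big_filter => /le_trans; apply; rewrite mulrA.
apply: ler_wpM2r; last exact: size_annulus_powR_le.
by apply: sumr_ge0 => n _; apply: powR_ge0.
Qed.

Lemma exceptional_density_le (A D L : R) a :
  (0 < N)%N -> 0 <= A -> 1 <= D -> 0 < L ->
  (forall j, inner N (phi j) (phi j) = 1) -> a (0, 0) != 0 ->
  (forall n, D <= znorm n -> a n = 0) ->
  (forall n, n != (0, 0) -> cabs (a n) <= A * cabs (a (0, 0))) ->
  #|Sexc N kappa phi a (Num.truncn D) L|%:R / N%:R <=
    A `^ p * 9 `^ (p - 1) * D `^ (2 * (p - 1)) / L `^ p *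
    \sum_(n <- zbox (Num.truncn D) | annulus D n) Vp N kappa phi p n.
Proof.
move=> N_gt0 A_ge0 D_ge1 L_gt0 phi_unit a0_neq0 a_supp a_le.
set C := A `^ p * 9 `^ (p - 1) * D `^ (2 * (p - 1)).
set V := \sum_(n <- _ | _) Vp N kappa phi p n.
pose W j := C * \sum_(n <- zbox (Num.truncn D) | annulus D n)
  cabs (inner N (TN N kappa n (phi j)) (phi j) - mu_e n) `^ p.
have card_le : #|Sexc N kappa phi a (Num.truncn D) L|%:R * L `^ p <= \sum_j W j.
  apply: card_mul_le_sum => [j|j]; last exact: exceptional_moment_le.
  by rewrite mulr_ge0 ?sumr_ge0 // => [|n _]; rewrite ?powR_ge0 // !mulr_ge0 ?powR_ge0.
have sum_W : \sum_j W j = C * (N%:R * V).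
  rewrite -big_distrr /=; congr (C * _).
  rewrite exchange_big /V big_distrr /=; apply: eq_bigr => n _.
  by rewrite /Vp mulrA divff ?mul1r // pnatr_eq0 -lt0n.
have N_gt0' : 0 < N%:R :> R by rewrite ltr0n.
have Lp_gt0 : 0 < L `^ p by rewrite powR_gt0.
have -> : C / L `^ p * V = C * (N%:R * V) / L `^ p / N%:R.
  by field; rewrite !gt_eqF.
by rewrite ler_pM2r ?invr_gt0 // ler_pdivlMr // -sum_W.
Qed.

Lemma exceptional_density_scaled_le (c0 m s D L : R) a :
  (0 < N)%N -> 0 < c0 -> 0 < m -> 0 < s -> 1 <= D -> 0 < L ->
  (forall j, inner N (phi j) (phi j) = 1) ->
  (forall n, D <= znorm n -> a n = 0) ->
  (forall n, cabs (a n) <= c0 * s) -> m * s <= cabs (a (0, 0)) ->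
  #|Sexc N kappa phi a (Num.truncn D) L|%:R / N%:R <=
    (c0 / m) `^ p * 9 `^ (p - 1) * D `^ (2 * (p - 1)) / L `^ p *
    \sum_(n <- zbox (Num.truncn D) | annulus D n) Vp N kappa phi p n.
Proof.
move=> N_gt0 c0_gt0 m_gt0 s_gt0 D_ge1 L_gt0 phi_unit a_supp a_le a0_ge.
apply: exceptional_density_le => //; first by rewrite divr_ge0 ?ltW.
  by apply: contraTneq _ a0_ge => ->; rewrite cabs0 -ltNge mulr_gt0.
move=> n _; apply: le_trans (a_le n) _.
have -> : c0 * s = c0 / m * (m * s) by rewrite mulrA divfK ?gt_eqF.
by rewrite ler_wpM2l // divr_ge0 ?ltW.
Qed.

End ExceptionalSet.

Lemma scale_error_le {R : realType} (D : R -> R) (C1 k : R) : 0 < k ->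
  (forall r, 0 < r -> 0 < D r) ->
  (forall eps, 0 < eps -> exists2 delta, 0 < delta &
      forall r, 0 < r < delta -> (D r)^-1 <= eps * r) ->
  exists2 delta, 0 < delta & forall r, 0 < r < delta -> C1 * (r / D r) <= k * r ^+ 2.
Proof.
move=> k_gt0 D_gt0 D_o; have C1_gt0 : 0 < `|C1| + 1 by rewrite ltr_wpDl.
have [delta delta_gt0 D_le] := D_o (k / (`|C1| + 1)) (divr_gt0 k_gt0 C1_gt0).
exists delta => // r /andP[r_gt0 r_lt]; have := D_le r; rewrite r_gt0 r_lt => /(_ isT).
move=> Dinv_le; have rD_le : r / D r <= k / (`|C1| + 1) * r ^+ 2.
  by rewrite expr2 mulrCA ler_pM2l.
have t_ge0 : 0 <= r / D r by rewrite divr_ge0 ?ltW ?D_gt0.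
apply: le_trans (ler_wpM2r t_ge0 (ler_norm C1)) _.
apply: le_trans (ler_wpM2l (normr_ge0 C1) rD_le) _.
rewrite mulrA ler_wpM2r ?sqr_ge0 // mulrA ler_pdivrMr // mulrC.
by rewrite ler_wpM2l ?(ltW k_gt0) // lerDl.
Qed.

Theorem lemma3p3 (R : realType) (p : R) (hp : 1 <= p) (c0 : R) (hc0 : 0 < c0) :
  exists2 c : R, 0 < c &
  forall (D : R -> R) (am ap : R -> int * int -> R[i]),
    (forall r, 0 < r -> 0 < D r) ->
    (* 1/D = o(r) as r -> 0 *)
    (forall eps, 0 < eps -> exists2 delta, 0 < delta &
        forall r, 0 < r < delta -> (D r)^-1 <= eps * r) ->
    (* properties of the minorant / majorant trigonometric polynomials *)
    (forall r, 0 < r < 2^-1 -> 1 <= r * D r ->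
       [/\ (forall n, D r <= znorm n -> am r n = 0 /\ ap r n = 0),
           (forall n, cabs (am r n) <= c0 * r ^+ 2 /\ cabs (ap r n) <= c0 * r ^+ 2),
           (forall y, inball r y ->
               trig (am r) (Num.truncn (D r)) y <= 1 /\ 1 <= trig (ap r) (Num.truncn (D r)) y) &
           (forall y, ~ inball r y ->
               trig (am r) (Num.truncn (D r)) y <= 0 /\ 0 <= trig (ap r) (Num.truncn (D r)) y)]) ->
    (* mu(a_r^pm) = Vol(B_2(0,r)) + O(r/D) as r -> 0 *)
    (exists C1, exists2 r1, 0 < r1 & forall r, 0 < r < r1 ->
        cabs (muC (am r) - (pi * r ^+ 2)%:C) <= C1 * (r / D r) /\
        cabs (muC (ap r) - (pi * r ^+ 2)%:C) <= C1 * (r / D r)) ->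
    exists2 r0 : R, 0 < r0 &
    forall r : R, 0 < r < r0 ->
    forall (N : nat) (kappa : R * R) (M : 'M[int]_2)
           (U : (int -> R[i]) -> (int -> R[i])) (phi : 'I_N -> int -> R[i]) (L : R),
      (0 < N)%N -> hyperbolic_SL2Z M -> is_quantization N kappa M U ->
      is_eigenbasis N kappa U phi -> 0 < L ->
      let K := Num.truncn (D r) in
      let RHS := c * (D r) `^ (2 * (p - 1)) / L `^ p *
          \sum_(n <- zbox K | (1 <= znorm (R:=R) n) && (znorm n <= D r)) Vp N kappa phi p n in
      (#|Sexc N kappa phi (ap r) K L|%:R / N%:R <= RHS) /\
      (#|Sexc N kappa phi (am r) K L|%:R / N%:R <= RHS).
Proof.
have pi2_gt0 : 0 < pi / 2 :> R by rewrite divr_gt0 ?pi_gt0.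
exists ((c0 / (pi / 2)) `^ p * 9 `^ (p - 1)).
  by apply: mulr_gt0; apply: powR_gt0; [exact: divr_gt0 | rewrite ltr0n].
move=> D am ap D_gt0 D_o a_props [C1 [r1 r1_gt0 mu_err]].
have [d1 d1_gt0 Dinv_le] := D_o 1 ltr01.
have [d2 d2_gt0 err_le] := scale_error_le _ C1 _ pi2_gt0 D_gt0 D_o.
exists (Num.min (Num.min 2^-1 d1) (Num.min d2 r1)).
  by rewrite !lt_min d1_gt0 d2_gt0 r1_gt0 invr_gt0 ltr0n.
move=> r /andP[r_gt0]; rewrite !lt_min.
move=> /andP[/andP[r_lt_half r_lt_d1] /andP[r_lt_d2 r_lt_r1]].
move=> N kappa M U phi L N_gt0 _ _ [_ phi_orth _] L_gt0 K RHS.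
have rD_ge1 : 1 <= r * D r.
  rewrite -ler_pdivrMr ?D_gt0 // div1r -[leRHS]mul1r.
  by apply: Dinv_le; rewrite r_gt0 r_lt_d1.
have D_ge1 : 1 <= D r.
  have r_lt1 : r < 1 by rewrite (lt_trans r_lt_half) // invf_lt1 ?ltr1n.
  by apply: le_trans rD_ge1 _; rewrite ger_pMl ?D_gt0 // ltW.
have r_half : 0 < r < 2^-1 by rewrite r_gt0.
have [a_supp a_le _ _] := a_props r r_half rD_ge1.
have r_r1 : 0 < r < r1 by rewrite r_gt0.
have [am_err ap_err] := mu_err r r_r1.
have mu_close a : cabs (muC a - (pi * r ^+ 2)%:C) <= C1 * (r / D r) ->
    pi / 2 * r ^+ 2 <= cabs (a (0, 0)).
  move=> a_err; rewrite mulrAC; apply: cabs_ge_half.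
    by rewrite mulr_ge0 ?sqr_ge0 ?pi_ge0.
  by apply: le_trans a_err _; rewrite mulrAC err_le ?r_gt0.
have phi_unit j : inner N (phi j) (phi j) = 1 by rewrite phi_orth eqxx.
split; apply: (@exceptional_density_scaled_le _ _ _ _ _ hp c0 (pi / 2) (r ^+ 2));
  rewrite ?exprn_gt0 //;
  by [move=> n /a_supp[] | move=> n; case: (a_le n) | exact: mu_close].
Qed.
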